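(* Let $U\colon\mathcal D\to\mathcal C$ be a strong monoidal functor between left closed monoidal categories. If $U$ is conservative and left closed, and $\mathcal C$ is left autonomous, then $\mathcal D$ is left autonomous.
   Context: Monoidal categories are strict. A monoidal category is left closed if for every object $X$ the functor $?\otimes X$ has a right adjoint $[X,?]^l$, with counit $\mathrm{ev}^X_Y\colon [X,Y]^l\otimes X\to Y$. A strong monoidal functor $U$ with structure isomorphisms $U_2(A,B)\colon UA\otimes UB\to U(A\otimes B)$, $U_0\colon\mathbb 1\to U\mathbb 1$ between left closed monoidal categories is left closed if for all $X,Y$ the morphism $U^l_{X,Y}\colon U[X,Y]^l\to[UX,UY]^l$ corresponding by adjunction to $U(\mathrm{ev}^X_Y)U_2([X,Y]^l,X)$ is an isomorphism. Left autonomous means every object $X$ has a left dual ${}^\vee X$ with $\mathrm{ev}_X\colon{}^\vee X\otimes X\to\mathbb 1$, $\mathrm{coev}_X\colon\mathbb 1\to X\otimes{}^\vee X$ satisfying the zigzag identities. Conservative means reflecting isomorphisms. *)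

Set Implicit Arguments.
Unset Strict Implicit.

Record Category := {
  ob :> Type;
  hom : ob -> ob -> Type;
  idm : forall A, hom A A;
  comp : forall A B C, hom B C -> hom A B -> hom A C;
  comp_id_l : forall A B (f : hom A B), comp (idm B) f = f;
  comp_id_r : forall A B (f : hom A B), comp f (idm A) = f;
  comp_assoc : forall A B C D (h : hom C D) (g : hom B C) (f : hom A B),
      comp h (comp g f) = comp (comp h g) f
}.

Arguments hom : clear implicits.
Arguments idm {c} A.
Arguments comp {c A B C} _ _.
Notation "g \o f" := (comp g f) (at level 40, left associativity).

(** Identity morphism transported along an equality of objects
    (used to express strictness: structural isos are identities). *)
Definition castm {C : Category} {A B : ob C} (e : A = B) : hom C A B :=
  match e in _ = B' return hom C A B' with eq_refl => idm A end.

Definition is_iso {C : Category} {A B : ob C} (f : hom C A B) : Prop :=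
  exists g : hom C B A, g \o f = idm A /\ f \o g = idm B.

Record StrictMonoidal := {
  mcat :> Category;
  tens : ob mcat -> ob mcat -> ob mcat;
  munit : ob mcat;
  tensm : forall A A' B B', hom mcat A A' -> hom mcat B B' ->
            hom mcat (tens A B) (tens A' B');
  tensm_id : forall A B, tensm (idm A) (idm B) = idm (tens A B);
  tensm_comp : forall A A' A'' B B' B''
      (f' : hom mcat A' A'') (f : hom mcat A A')
      (g' : hom mcat B' B'') (g : hom mcat B B'),
      tensm (f' \o f) (g' \o g) = tensm f' g' \o tensm f g;
  (* strictness: associator and unitors are identities *)
  assoc_ob : forall A B C, tens A (tens B C) = tens (tens A B) C;
  lunit_ob : forall A, tens munit A = A;
  runit_ob : forall A, tens A munit = A;
  assoc_nat : forall A A' B B' C C'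
      (f : hom mcat A A') (g : hom mcat B B') (h : hom mcat C C'),
      castm (assoc_ob A' B' C') \o tensm f (tensm g h)
      = tensm (tensm f g) h \o castm (assoc_ob A B C);
  lunit_nat : forall A A' (f : hom mcat A A'),
      castm (lunit_ob A') \o tensm (idm munit) f = f \o castm (lunit_ob A);
  runit_nat : forall A A' (f : hom mcat A A'),
      castm (runit_ob A') \o tensm f (idm munit) = f \o castm (runit_ob A)
}.

Arguments tens {s} _ _.
Arguments munit {s}.
Arguments tensm {s A A' B B'} _ _.
Arguments assoc_ob {s} A B C.
Arguments lunit_ob {s} A.
Arguments runit_ob {s} A.

(** * Left closed structure: for every X, (? ⊗ X) has a right adjoint
    [X,?]^l with counit ev^X_Y : [X,Y]^l ⊗ X -> Y, expressed by the
    universal property of the counit. *)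
Record LeftClosed (M : StrictMonoidal) := {
  lihom : ob M -> ob M -> ob M;
  lev : forall X Y, hom M (tens (lihom X Y) X) Y;
  lcurry : forall X Y Z, hom M (tens Z X) Y -> hom M Z (lihom X Y);
  lcurry_spec : forall X Y Z (f : hom M (tens Z X) Y),
      lev X Y \o tensm (lcurry f) (idm X) = f;
  lcurry_uniq : forall X Y Z (f : hom M (tens Z X) Y) (g : hom M Z (lihom X Y)),
      lev X Y \o tensm g (idm X) = f -> g = lcurry f
}.

Arguments lihom {M} l X Y.
Arguments lev {M} l X Y.
Arguments lcurry {M} l {X Y Z} _.

(** * Left duals and left autonomy (zigzag identities with the strict
    structural identifications made explicit by castm). *)
Definition is_left_dual (M : StrictMonoidal) (X Xv : ob M)
    (e : hom M (tens Xv X) munit) (c : hom M munit (tens X Xv)) : Prop :=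
  castm (runit_ob X) \o tensm (idm X) e \o castm (eq_sym (assoc_ob X Xv X))
    \o tensm c (idm X) \o castm (eq_sym (lunit_ob X)) = idm X
  /\
  castm (lunit_ob Xv) \o tensm e (idm Xv) \o castm (assoc_ob Xv X Xv)
    \o tensm (idm Xv) c \o castm (eq_sym (runit_ob Xv)) = idm Xv.

Definition left_autonomous (M : StrictMonoidal) : Prop :=
  forall X : ob M, exists (Xv : ob M) (e : hom M (tens Xv X) munit)
    (c : hom M munit (tens X Xv)), is_left_dual e c.

Record StrongMonoidalFunctor (D C : StrictMonoidal) := {
  fob :> ob D -> ob C;
  fmap : forall A B, hom D A B -> hom C (fob A) (fob B);
  fmap_id : forall A, fmap (idm A) = idm (fob A);
  fmap_comp : forall A B E (g : hom D B E) (f : hom D A B),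
      fmap (g \o f) = fmap g \o fmap f;
  U2 : forall A B, hom C (tens (fob A) (fob B)) (fob (tens A B));
  U0 : hom C munit (fob munit);
  U2_iso : forall A B, is_iso (U2 A B);
  U0_iso : is_iso U0;
  U2_nat : forall A A' B B' (f : hom D A A') (g : hom D B B'),
      fmap (tensm f g) \o U2 A B = U2 A' B' \o tensm (fmap f) (fmap g);
  U2_assoc : forall A B E,
      U2 (tens A B) E \o tensm (U2 A B) (idm (fob E))
        \o castm (assoc_ob (fob A) (fob B) (fob E))
      = fmap (castm (assoc_ob A B E)) \o U2 A (tens B E)
        \o tensm (idm (fob A)) (U2 B E);
  U2_lunit : forall A,
      U2 munit A \o tensm U0 (idm (fob A))
      = fmap (castm (eq_sym (lunit_ob A))) \o castm (lunit_ob (fob A));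
  U2_runit : forall A,
      U2 A munit \o tensm (idm (fob A)) U0
      = fmap (castm (eq_sym (runit_ob A))) \o castm (runit_ob (fob A))
}.

Arguments fmap {D C} s {A B} _.
Arguments U2 {D C} s A B.
Arguments U0 {D C} s.

Definition conservative (D C : StrictMonoidal) (U : StrongMonoidalFunctor D C) :=
  forall A B (f : hom D A B), is_iso (fmap U f) -> is_iso f.

Definition Ul (D C : StrictMonoidal) (LD : LeftClosed D) (LC : LeftClosed C)
    (U : StrongMonoidalFunctor D C) (X Y : ob D)
    : hom C (U (lihom LD X Y)) (lihom LC (U X) (U Y)) :=
  lcurry LC (fmap U (lev LD X Y) \o U2 U (lihom LD X Y) X).

Definition left_closed_functor (D C : StrictMonoidal) (LD : LeftClosed D)
    (LC : LeftClosed C) (U : StrongMonoidalFunctor D C) : Prop :=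
  forall X Y : ob D, is_iso (Ul LD LC U X Y).

(* Take V := [X,1]^l with ev : V ⊗ X -> 1 and the transpose
   theta : X ⊗ V -> [X,X]^l of X ⊗ V ⊗ X -> X ⊗ 1 = X.  Whenever (V, ev) admits
   a coevaluation, theta is invertible; conversely, if theta is invertible then
   theta^-1 applied to the name 1 -> [X,X]^l of the identity is a coevaluation.
   In C, U X has a dual, and since U is left closed U V with the transported
   evaluation is again a universal evaluation, hence itself a dual of U X; so the
   theta of C is invertible.  Up to the isomorphisms U^l and U2 this theta is
   U(theta), and conservativity makes the theta of D invertible.  Only the first
   zigzag identity needs checking each time: tensoring the second one with X and
   applying ev reduces it to the first, and ev is universal. *)
From Stdlib Require Import ProofIrrelevance.
From Corelib Require Import ssreflect.
Set Implicit Arguments.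
Unset Strict Implicit.

Section CategoryFacts.

Variable C : Category.

Lemma castm_irrelevant {A B : ob C} (e1 e2 : A = B) : castm e1 = castm e2.
Proof. by rewrite (proof_irrelevance _ e1 e2). Qed.

Lemma castm_id {A : ob C} (e : A = A) : castm e = idm A.
Proof. exact: castm_irrelevant e eq_refl. Qed.

Lemma comp_castm {A B E : ob C} (e1 : A = B) (e2 : B = E) :
  castm e2 \o castm e1 = castm (eq_trans e1 e2).
Proof. by destruct e2; apply: comp_id_l. Qed.

Lemma comp_castm_k {A B E Z : ob C} (e1 : A = B) (e2 : B = E) (k : hom C Z A) :
  castm e2 \o (castm e1 \o k) = castm (eq_trans e1 e2) \o k.
Proof. by rewrite comp_assoc comp_castm. Qed.

Lemma castm_sym_square {A B A' B' : ob C} (e : A' = B') (e' : A = B)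
    (x : hom C A A') (y : hom C B B') :
  castm e \o x = y \o castm e' -> castm (eq_sym e) \o y = x \o castm (eq_sym e').
Proof. by destruct e, e'; rewrite /= !comp_id_l !comp_id_r => ->. Qed.

Lemma comp_congr2 {A B B' E : ob C} {g : hom C B E} {f : hom C A B}
    {g' : hom C B' E} {f' : hom C A B'} :
  g \o f = g' \o f' -> forall Z (k : hom C Z A), g \o (f \o k) = g' \o (f' \o k).
Proof. by move=> H Z k; rewrite !comp_assoc H. Qed.

Lemma comp_congr1 {A B E : ob C} {g : hom C B E} {f : hom C A B} {h : hom C A E} :
  g \o f = h -> forall Z (k : hom C Z A), g \o (f \o k) = h \o k.
Proof. by move=> H Z k; rewrite comp_assoc H. Qed.

Lemma iso_sandwich {A B A' B' : ob C} (a : hom C B B') (f : hom C A B)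
    (b : hom C A' A) (t : hom C A' B') :
  is_iso a -> is_iso b -> is_iso t -> a \o f \o b = t -> is_iso f.
Proof.
move=> [ai [aiK aKi]] [bi [biK bKi]] [ti [tiK tKi]] H.
have af : a \o f = t \o bi by rewrite -H -comp_assoc bKi comp_id_r.
have fb : f \o b = ai \o t by rewrite -H -!comp_assoc (comp_assoc ai a) aiK comp_id_l.
exists (b \o ti \o a); split.
- by rewrite -!comp_assoc af (comp_assoc ti t) tiK comp_id_l bKi.
- by rewrite !comp_assoc fb -(comp_assoc ai t ti) tKi comp_id_r aiK.
Qed.

End CategoryFacts.

Ltac assoc_right := rewrite -?comp_assoc.
Ltac merge_castm := repeat (first [ rewrite comp_castm_k | rewrite comp_castm ]).
Ltac castm_eq := repeat (first [ reflexivity | apply: castm_irrelevant | f_equal ]).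

Section MonoidalFacts.

Variable M : StrictMonoidal.

Lemma tensm_id_castm {A B B' : ob M} (e : B = B') :
  tensm (idm A) (castm e) = castm (f_equal (@tens M A) e).
Proof. by destruct e; rewrite !castm_id; apply: tensm_id. Qed.

Lemma tensm_castm_id {A A' B : ob M} (e : A = A') :
  tensm (castm e) (idm B) = castm (f_equal (fun X => @tens M X B) e).
Proof. by destruct e; rewrite !castm_id; apply: tensm_id. Qed.

Lemma tensm_compl {A A' A'' B : ob M} (f' : hom M A' A'') (f : hom M A A') :
  tensm (f' \o f) (idm B) = tensm f' (idm B) \o tensm f (idm B).
Proof. by rewrite -tensm_comp comp_id_l. Qed.

Lemma tensm_compr {A B B' B'' : ob M} (g' : hom M B' B'') (g : hom M B B') :
  tensm (idm A) (g' \o g) = tensm (idm A) g' \o tensm (idm A) g.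
Proof. by rewrite -tensm_comp comp_id_l. Qed.

Lemma tensm_interchange_l {A A' B B' : ob M} (f : hom M A A') (g : hom M B B') :
  tensm f (idm B') \o tensm (idm A) g = tensm f g.
Proof. by rewrite -tensm_comp comp_id_l comp_id_r. Qed.

Lemma tensm_interchange_r {A A' B B' : ob M} (f : hom M A A') (g : hom M B B') :
  tensm (idm A') g \o tensm f (idm B) = tensm f g.
Proof. by rewrite -tensm_comp comp_id_l comp_id_r. Qed.

Lemma assoc_nat_sym {A A' B B' E E' : ob M}
    (f : hom M A A') (g : hom M B B') (h : hom M E E') :
  castm (eq_sym (assoc_ob A' B' E')) \o tensm (tensm f g) h
  = tensm f (tensm g h) \o castm (eq_sym (assoc_ob A B E)).
Proof. exact/castm_sym_square/assoc_nat. Qed.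

Lemma runit_nat_sym {A A' : ob M} (f : hom M A A') :
  castm (eq_sym (runit_ob A')) \o f
  = tensm f (idm munit) \o castm (eq_sym (runit_ob A)).
Proof. exact/castm_sym_square/runit_nat. Qed.

Lemma assoc_nat_l {A A' B E : ob M} (f : hom M A A') :
  castm (assoc_ob A' B E) \o tensm f (idm (tens B E))
  = tensm (tensm f (idm B)) (idm E) \o castm (assoc_ob A B E).
Proof. by rewrite -tensm_id assoc_nat. Qed.

Lemma tensm_assoc_r {A A' B B' E E' : ob M}
    (f : hom M A A') (g : hom M B B') (h : hom M E E') :
  tensm f (tensm g h)
  = castm (eq_sym (assoc_ob A' B' E')) \o tensm (tensm f g) h \o castm (assoc_ob A B E).
Proof. by rewrite -comp_assoc -assoc_nat comp_assoc comp_castm castm_id comp_id_l. Qed.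

Lemma tensm_assoc_l {A A' B B' E E' : ob M}
    (f : hom M A A') (g : hom M B B') (h : hom M E E') :
  tensm (tensm f g) h
  = castm (assoc_ob A' B' E') \o tensm f (tensm g h) \o castm (eq_sym (assoc_ob A B E)).
Proof. by rewrite -comp_assoc -assoc_nat_sym comp_assoc comp_castm castm_id comp_id_l. Qed.

End MonoidalFacts.

Ltac normalize_castm := rewrite ?tensm_id_castm ?tensm_castm_id; assoc_right; merge_castm.

Section Duals.

Variable M : StrictMonoidal.

Definition contract (A : ob M) {V X : ob M} (e : hom M (tens V X) munit)
    : hom M (tens (tens A V) X) A :=
  castm (runit_ob A) \o tensm (idm A) e \o castm (eq_sym (assoc_ob A V X)).

Definition zigzag_l {X V : ob M} (e : hom M (tens V X) munit)
    (c : hom M munit (tens X V)) : hom M X X :=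
  contract X e \o tensm c (idm X) \o castm (eq_sym (lunit_ob X)).

Definition zigzag_r {X V : ob M} (e : hom M (tens V X) munit)
    (c : hom M munit (tens X V)) : hom M V V :=
  castm (lunit_ob V) \o tensm e (idm V) \o castm (assoc_ob V X V)
    \o tensm (idm V) c \o castm (eq_sym (runit_ob V)).

Lemma is_left_dualE {X V : ob M} (e : hom M (tens V X) munit) (c : hom M munit (tens X V)) :
  is_left_dual e c <-> zigzag_l e c = idm X /\ zigzag_r e c = idm V.
Proof. exact: iff_refl. Qed.

(* [e] exhibits [V] as [[X,Y]^l]. *)
Definition universal_ev {V X Y : ob M} (e : hom M (tens V X) Y) : Prop :=
  forall Z (f : hom M (tens Z X) Y), exists! g : hom M Z V, e \o tensm g (idm X) = f.

Lemma lev_universal (L : LeftClosed M) (X Y : ob M) : universal_ev (lev L X Y).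
Proof.
move=> Z f; exists (lcurry L f); split; first exact: lcurry_spec.
by move=> g /lcurry_uniq.
Qed.

Lemma universal_ev_cancel {V X Y Z : ob M} (e : hom M (tens V X) Y) (g1 g2 : hom M Z V) :
  universal_ev e -> e \o tensm g1 (idm X) = e \o tensm g2 (idm X) -> g1 = g2.
Proof.
move=> univ eq12; have [g [_ gU]] := univ Z (e \o tensm g2 (idm X)).
by rewrite -(gU g1 eq12) -(gU g2 eq_refl).
Qed.

Lemma universal_ev_precomp {V V' X Y : ob M} (e : hom M (tens V' X) Y) (a : hom M V V') :
  is_iso a -> universal_ev e -> universal_ev (e \o tensm a (idm X)).
Proof.
move=> [ai [aiK aKi]] univ Z f; have [g [eg gU]] := univ Z f.
exists (ai \o g); split.
- by rewrite -comp_assoc -tensm_compl comp_assoc aKi comp_id_l.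
- move=> h eh; have gah : g = a \o h by apply: gU; rewrite tensm_compl comp_assoc.
  by rewrite gah comp_assoc aiK comp_id_l.
Qed.

Lemma universal_ev_postcomp {V X Y Y' : ob M} (e : hom M (tens V X) Y) (b : hom M Y Y') :
  is_iso b -> universal_ev e -> universal_ev (b \o e).
Proof.
move=> [bi [biK bKi]] univ Z f; have [g [eg gU]] := univ Z (bi \o f).
exists g; split.
- by rewrite -comp_assoc eg comp_assoc bKi comp_id_l.
- by move=> h eh; apply: gU; rewrite -eh -!comp_assoc (comp_assoc bi) biK comp_id_l.
Qed.

Lemma tensm_id_zigzag_l (X V Y : ob M) (e : hom M (tens V X) munit) (c : hom M munit (tens X V)) :
  tensm (idm Y) (zigzag_l e c)
  = contract (tens Y X) e \o tensm (castm (assoc_ob Y X V)) (idm X)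
    \o tensm (tensm (idm Y) c) (idm X) \o tensm (castm (eq_sym (runit_ob Y))) (idm X).
Proof.
rewrite /zigzag_l /contract !tensm_compr.
rewrite (tensm_assoc_r (idm Y) (idm X) e) (tensm_assoc_r (idm Y) c (idm X)) !tensm_id.
normalize_castm; castm_eq.
Qed.

Lemma ev_contract {V X : ob M} (e : hom M (tens V X) munit) :
  e \o tensm (castm (lunit_ob V)) (idm X) \o tensm (tensm e (idm V)) (idm X)
  = e \o contract (tens V X) e.
Proof.
rewrite /contract tensm_assoc_l tensm_id tensm_castm_id. assoc_right. merge_castm.
rewrite (castm_irrelevant _ (lunit_ob (tens V X))).
rewrite -(comp_congr2 (lunit_nat e)).
rewrite (comp_congr1 (tensm_interchange_r e e)) -(comp_congr1 (tensm_interchange_l e e)).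
rewrite (castm_irrelevant (lunit_ob (@munit M)) (runit_ob (@munit M))).
by rewrite (comp_congr2 (runit_nat e)).
Qed.

Lemma contract_nat {A V X : ob M} (a : hom M A X) (e : hom M (tens V X) munit) :
  contract X e \o tensm (tensm a (idm V)) (idm X) = a \o contract A e.
Proof.
rewrite /contract; assoc_right.
rewrite assoc_nat_sym tensm_id.
rewrite (comp_congr1 (tensm_interchange_r a e)) -(comp_congr1 (tensm_interchange_l a e)).
by rewrite (comp_congr2 (runit_nat a)).
Qed.

Lemma contract_precomp {A V W X : ob M} (e : hom M (tens V X) munit) (g : hom M W V) :
  contract A e \o tensm (tensm (idm A) g) (idm X) = contract A (e \o tensm g (idm X)).
Proof.
rewrite /contract; assoc_right.
by rewrite assoc_nat_sym tensm_compr; assoc_right.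
Qed.

Lemma zigzag_r_of_zigzag_l {X V : ob M} (e : hom M (tens V X) munit)
    (c : hom M munit (tens X V)) :
  universal_ev e -> zigzag_l e c = idm X -> zigzag_r e c = idm V.
Proof.
move=> univ zl; apply: (universal_ev_cancel univ).
rewrite tensm_id comp_id_r /zigzag_r !tensm_compl !comp_assoc ev_contract.
transitivity (e \o tensm (idm V) (zigzag_l e c)); last by rewrite zl tensm_id comp_id_r.
by rewrite tensm_id_zigzag_l !comp_assoc.
Qed.

Lemma tensm_id_zigzag_r {X V : ob M} (e : hom M (tens V X) munit) (c : hom M munit (tens X V)) :
  tensm (idm X) (zigzag_r e c)
  = tensm (contract X e) (idm V) \o castm (assoc_ob (tens X V) X V)
    \o tensm (idm (tens X V)) c \o castm (eq_sym (runit_ob (tens X V))).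
Proof.
rewrite /zigzag_r /contract !tensm_compl !tensm_compr.
rewrite (tensm_assoc_r (idm X) e (idm V)) (tensm_assoc_r (idm X) (idm V) c) !tensm_id.
normalize_castm; castm_eq.
Qed.

Definition theta (L : LeftClosed M) {X V : ob M} (e : hom M (tens V X) munit)
    : hom M (tens X V) (lihom L X X) :=
  lcurry L (contract X e).

Lemma theta_iso (L : LeftClosed M) {X V : ob M} (e : hom M (tens V X) munit)
    (c : hom M munit (tens X V)) :
  is_left_dual e c -> is_iso (theta L e).
Proof.
move=> /is_left_dualE [zl zr].
exists (tensm (lev L X X) (idm V) \o castm (assoc_ob (lihom L X X) X V)
     \o tensm (idm (lihom L X X)) c \o castm (eq_sym (runit_ob (lihom L X X)))); split.
- assoc_right; rewrite runit_nat_sym.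
  rewrite (comp_congr1 (tensm_interchange_r (theta L e) c)).
  rewrite -(comp_congr1 (tensm_interchange_l (theta L e) c)).
  rewrite (comp_congr2 (assoc_nat_l _)) (comp_congr1 (eq_sym (tensm_compl _ _))).
  rewrite /theta lcurry_spec.
  transitivity (tensm (idm X) (zigzag_r e c)); last by rewrite zr tensm_id.
  by rewrite tensm_id_zigzag_r; assoc_right.
- transitivity (lcurry L (lev L X X));
    last by symmetry; apply: lcurry_uniq; rewrite tensm_id comp_id_r.
  apply: lcurry_uniq; rewrite !tensm_compl !comp_assoc /theta lcurry_spec contract_nat.
  transitivity (lev L X X \o tensm (idm (lihom L X X)) (zigzag_l e c));
    last by rewrite zl tensm_id comp_id_r.
  by rewrite tensm_id_zigzag_l !comp_assoc.
Qed.

Lemma dual_of_theta_iso (L : LeftClosed M) {X V : ob M} (e : hom M (tens V X) munit) :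
  universal_ev e -> is_iso (theta L e) -> exists c, is_left_dual e c.
Proof.
move=> univ [thi [_ thiK]].
pose name_id := lcurry L (castm (lunit_ob X)).
have zl : zigzag_l e (thi \o name_id) = idm X.
  rewrite /zigzag_l -(lcurry_spec L (contract X e)) -/(theta L e) !tensm_compl !comp_assoc.
  rewrite -(comp_assoc (lev L X X)) -tensm_compl thiK tensm_id comp_id_r.
  by rewrite lcurry_spec comp_castm castm_id.
exists (thi \o name_id); apply/is_left_dualE; split; first exact: zl.
exact: zigzag_r_of_zigzag_l.
Qed.

Lemma dual_transport {X V W : ob M} (e : hom M (tens V X) munit)
    (eps : hom M (tens W X) munit) (eta : hom M munit (tens X W)) :
  universal_ev e -> is_left_dual eps eta -> exists c, is_left_dual e c.
Proof.
move=> univ /is_left_dualE [zl _]; have [g [eg _]] := univ W eps.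
have zl' : zigzag_l e (tensm (idm X) g \o eta) = idm X.
  by rewrite /zigzag_l tensm_compl !comp_assoc contract_precomp eg.
exists (tensm (idm X) g \o eta); apply/is_left_dualE; split; first exact: zl'.
exact: zigzag_r_of_zigzag_l.
Qed.

End Duals.

Section StrongMonoidalFunctorFacts.

Variables (D C : StrictMonoidal) (U : StrongMonoidalFunctor D C).
Variable U0i : hom C (U munit) munit.
Hypotheses (U0iK : U0i \o U0 U = idm munit) (U0Ki : U0 U \o U0i = idm (U munit)).

Lemma U2_nat_l {A A' B : ob D} (f : hom D A A') :
  fmap U (tensm f (idm B)) \o U2 U A B = U2 U A' B \o tensm (fmap U f) (idm (U B)).
Proof. by rewrite U2_nat fmap_id. Qed.

Lemma U2_nat_r {A B B' : ob D} (f : hom D B B') :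
  fmap U (tensm (idm A) f) \o U2 U A B = U2 U A B' \o tensm (idm (U A)) (fmap U f).
Proof. by rewrite U2_nat fmap_id. Qed.

Lemma U2_assoc_sym (A B E : ob D) :
  U2 U (tens A B) E \o tensm (U2 U A B) (idm (U E))
  = fmap U (castm (assoc_ob A B E)) \o U2 U A (tens B E) \o tensm (idm (U A)) (U2 U B E)
    \o castm (eq_sym (assoc_ob (U A) (U B) (U E))).
Proof. by rewrite -U2_assoc -comp_assoc comp_castm castm_id comp_id_r. Qed.

Lemma fmap_runit_U2 (A : ob D) :
  fmap U (castm (runit_ob A)) \o U2 U A munit
  = castm (runit_ob (U A)) \o tensm (idm (U A)) U0i.
Proof.
transitivity (fmap U (castm (runit_ob A)) \o U2 U A munit
                \o tensm (idm (U A)) (U0 U) \o tensm (idm (U A)) U0i).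
  by rewrite -comp_assoc -tensm_compr U0Ki tensm_id comp_id_r.
rewrite -(comp_assoc _ (U2 U A munit)) U2_runit comp_assoc -fmap_comp.
by rewrite comp_castm castm_id fmap_id comp_id_l.
Qed.

Definition fmap_ev {V X : ob D} (e : hom D (tens V X) munit)
    : hom C (tens (U V) (U X)) munit :=
  U0i \o fmap U e \o U2 U V X.

Variables (LD : LeftClosed D) (LC : LeftClosed C).

Lemma fmap_lev_universal (X : ob D) :
  is_iso (Ul LD LC U X munit) -> universal_ev (fmap_ev (lev LD X munit)).
Proof.
move=> isoUl; rewrite /fmap_ev -comp_assoc -(lcurry_spec LC (fmap U _ \o _)).
apply: universal_ev_postcomp; first by exists (U0 U).
apply: (universal_ev_precomp isoUl); exact: lev_universal.
Qed.

Lemma Ul_theta {X V : ob D} (e : hom D (tens V X) munit) :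
  Ul LD LC U X X \o fmap U (theta LD e) \o U2 U X V = theta LC (fmap_ev e).
Proof.
apply: lcurry_uniq; rewrite !tensm_compl; assoc_right.
rewrite /Ul (comp_congr1 (lcurry_spec LC _)); assoc_right.
rewrite -(comp_congr2 (U2_nat_l (theta LD e))) (comp_congr1 (eq_sym (fmap_comp U _ _))).
rewrite /theta lcurry_spec /contract !fmap_comp; assoc_right.
rewrite U2_assoc_sym; assoc_right.
rewrite (comp_congr1 (eq_sym (fmap_comp U (castm (eq_sym (assoc_ob X V X))) _))).
rewrite comp_castm castm_id fmap_id comp_id_l.
rewrite (comp_congr2 (U2_nat_r e)) (comp_congr2 (fmap_runit_U2 X)).
by rewrite /fmap_ev !tensm_compr; assoc_right.
Qed.

End StrongMonoidalFunctorFacts.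

Theorem mainTheorem4 (D C : StrictMonoidal) (LD : LeftClosed D) (LC : LeftClosed C)
    (U : StrongMonoidalFunctor D C) :
  conservative U -> left_closed_functor LD LC U -> left_autonomous C ->
  left_autonomous D.
Proof.
move=> conservU closedU autC X.
have [U0i [U0iK U0Ki]] := U0_iso U.
have [W [eps [eta dualW]]] := autC (U X).
have univ_ev_C := fmap_lev_universal U0iK U0Ki (closedU X munit).
have [cC dualC] := dual_transport univ_ev_C dualW.
have iso_fmap_theta : is_iso (fmap U (theta LD (lev LD X munit))).
  apply: iso_sandwich (closedU X X) (U2_iso U X _) (theta_iso LC dualC) _.
  exact: Ul_theta.
have [c dual] :=
  dual_of_theta_iso (@lev_universal D LD X munit) (conservU _ _ _ iso_fmap_theta).
by exists (lihom LD X munit), (lev LD X munit), c.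
Qed.
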